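(* For any $k \in \mathbb{N}$ and $n_1,\ldots,n_k \in \mathbb{N}$, $R_\mathrm{cyc}(S_{n_1},\ldots,S_{n_k}) = R(S_{n_1},\ldots,S_{n_k})$, where each $S_{n_j}$ is any star graph of order $n_j$.
   Context: All graphs are finite, simple and undirected, and a graph of order $n$ has vertex set $\{0,1,\ldots,n-1\}$; $K_n$ is the complete graph on $\{0,\ldots,n-1\}$. A $k$-edge-coloring of $K_n$ assigns each edge a color in $\{1,\ldots,k\}$. For a graph $H$ and such a coloring, an embedding of $H$ in color $j$ is an injective map $\varphi\colon V(H)\to V(K_n)$ such that for every edge $uv$ of $H$ the edge $\{\varphi(u),\varphi(v)\}$ has color $j$; it is increasing up to a cyclic permutation if there exists $t\in V(H)$ such that $(\varphi(t),\ldots,\varphi(|H|-1),\varphi(0),\ldots,\varphi(t-1))$ is increasing. $R(H_1,\ldots,H_k)$ is the smallest $n$ such that every $k$-edge-coloring of $K_n$ admits, for some $j$, an embedding of $H_j$ in color $j$; $R_\mathrm{cyc}$ is defined in the same way but requiring the embedding to be increasing up to a cyclic permutation. A star graph of order $n$ is a graph on $\{0,\ldots,n-1\}$ in which one vertex (the center, arbitrary) is adjacent to all others and there are no other edges. *)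

From mathcomp Require Import all_boot.
Set Implicit Arguments. Unset Strict Implicit. Unset Printing Implicit Defensive.

(* A graph of order m: a relation on 'I_m = {0,...,m-1} (simple: symmetric, irreflexive). *)

Definition star_graph (m : nat) (c : 'I_m) : rel 'I_m :=
  fun u v => (u != v) && ((u == c) || (v == c)).

(* A k-edge-coloring of K_n: a symmetric map on pairs of vertices with colors in 'I_k
   (colors 1..k of the paper are indexed 0..k-1; values on the diagonal are irrelevant). *)
Definition edge_coloring (n k : nat) (col : 'I_n -> 'I_n -> 'I_k) : Prop :=
  forall x y, col x y = col y x.

Definition embedding_in_color (m n k : nat) (H : rel 'I_m) (col : 'I_n -> 'I_n -> 'I_k)
  (j : 'I_k) (phi : 'I_m -> 'I_n) : Prop :=
  injective phi /\ forall u v, H u v -> col (phi u) (phi v) = j.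

Definition cyclically_increasing (m n : nat) (phi : 'I_m -> 'I_n) : Prop :=
  exists t : 'I_m, sorted ltn (map (fun i => nat_of_ord (phi i)) (rot t (enum 'I_m))).

Definition ramsey_prop (cyc : bool) (k : nat) (m : 'I_k -> nat)
  (H : forall j : 'I_k, rel 'I_(m j)) (n : nat) : Prop :=
  forall col : 'I_n -> 'I_n -> 'I_k, edge_coloring col ->
    exists j : 'I_k, exists phi : 'I_(m j) -> 'I_n,
      embedding_in_color (H j) col j phi /\ (cyc -> cyclically_increasing phi).

Definition is_least (P : nat -> Prop) (r : nat) : Prop :=
  P r /\ forall n, n < r -> ~ P n.

Definition is_ramsey_number k m H r := is_least (@ramsey_prop false k m H) r.
Definition is_cyc_ramsey_number k m H r := is_least (@ramsey_prop true k m H) r.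

From mathcomp Require Import all_boot.

Set Implicit Arguments.
Unset Strict Implicit.
Unset Printing Implicit Defensive.

(* An embedding of a star only matters through its image and the image of the
   centre.  Listing the image in increasing order and rotating this list so
   that the image of the centre sits at the position of the centre gives a
   relabelling that embeds the same star in the same colour and is increasing
   up to a cyclic permutation. *)

Lemma nth_rotr (T : Type) (x0 : T) (s : seq T) i :
  i < size s -> nth x0 (rotr i s) i = nth x0 s 0.
Proof.
move=> lt_is; rewrite /rotr /rot nth_cat size_drop subKn ?ltnn ?subnn; last exact: ltnW.
by rewrite nth_take // subn_gt0.
Qed.

Lemma sorted_enum_ord_val n (A : {pred 'I_n}) : sorted ltn (map val (enum A)).
Proof.
apply: (subseq_sorted ltn_trans _ (iota_ltn_sorted 0 n)).
by rewrite -val_enum_ord map_subseq // enumT filter_subseq.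
Qed.

Lemma cyclically_increasing_rot m n (phi : 'I_m -> 'I_n) t : 0 < m ->
  sorted ltn (map val (map phi (rot t (enum 'I_m)))) -> cyclically_increasing phi.
Proof.
move=> m_gt0; rewrite -map_comp.
have [lt_tm | le_mt] := ltnP t m; first by exists (Ordinal lt_tm).
rewrite rot_oversize ?size_enum_ord // => sorted_phi.
by exists (Ordinal m_gt0); rewrite rot0.
Qed.

Lemma cyclic_relabelling m n (phi : 'I_m -> 'I_n) (c : 'I_m) : injective phi ->
  exists psi : 'I_m -> 'I_n,
    [/\ injective psi, psi c = phi c, forall i, psi i \in codom phi
      & cyclically_increasing psi].
Proof.
move=> phi_inj; set S := enum (codom phi).
have size_S : size S = m by rewrite -cardE card_codom // card_ord.
have mem_S x : (x \in S) = (x \in codom phi) by rewrite mem_enum.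
have phi_c_S : phi c \in S by rewrite mem_S codom_f.
set p := index (phi c) S; set L := rotr c (rot p S).
have size_L : size L = m by rewrite size_rotr size_rot.
have uniq_L : uniq L by rewrite rotr_uniq rot_uniq enum_uniq.
pose psi (i : 'I_m) := nth (phi c) L i.
have map_psi : map psi (enum 'I_m) = L.
  by rewrite -[RHS](mkseq_nth (phi c)) size_L /mkseq -val_enum_ord -map_comp.
have [q le_qm def_L] : exists2 q, q <= m & L = rot q S.
  exists (rot_add S p (m - c)); first by rewrite -[X in _ <= X]size_S leq_rot_add.
  by rewrite -rot_rot_add /L /rotr size_rot size_S.
exists psi; split.
- by move=> i i' /eqP; rewrite nth_uniq ?size_L // => /eqP /val_inj.
- by rewrite /psi nth_rotr ?size_rot ?size_S // rot_index.
- by move=> i; rewrite -mem_S -(mem_rot p) -(mem_rotr c) mem_nth ?size_L.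
- apply: (cyclically_increasing_rot (t := m - q)); first exact: leq_ltn_trans (ltn_ord c).
  rewrite map_rot map_psi def_L -size_S -(size_rot q S) -/(rotr q _) rotK.
  exact: sorted_enum_ord_val.
Qed.

Lemma star_embedding_relabel m n k (c : 'I_m) (col : 'I_n -> 'I_n -> 'I_k) j
    (phi psi : 'I_m -> 'I_n) :
  edge_coloring col -> embedding_in_color (star_graph c) col j phi ->
  injective psi -> psi c = phi c -> (forall i, psi i \in codom phi) ->
  embedding_in_color (star_graph c) col j psi.
Proof.
move=> col_sym [_ phi_star] psi_inj psi_c psi_phi; split=> // u v.
have from_centre w : w != c -> col (psi c) (psi w) = j.
  move=> w_c; have /codomP [x def_w] := psi_phi w.
  rewrite psi_c def_w; apply: phi_star; rewrite /star_graph eqxx /= andbT.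
  by apply: contra w_c => /eqP c_x; apply/eqP/psi_inj; rewrite psi_c def_w c_x.
case/andP=> u_v /orP [/eqP u_c | /eqP v_c]; subst.
- by apply: from_centre; rewrite eq_sym.
- by rewrite col_sym; apply: from_centre.
Qed.

Lemma ramsey_prop_star_cyc k (m : 'I_k -> nat) (ctr : forall j : 'I_k, 'I_(m j)) n :
  ramsey_prop true (fun j => star_graph (ctr j)) n <->
  ramsey_prop false (fun j => star_graph (ctr j)) n.
Proof.
split=> ramsey col col_sym; have [j [phi [phi_star _]]] := ramsey col col_sym.
  by exists j, phi.
have [psi [psi_inj psi_c psi_phi psi_cyc]] := cyclic_relabelling (ctr j) (proj1 phi_star).
by exists j, psi; split=> //; apply: star_embedding_relabel phi_star _ _ _.
Qed.

Lemma eq_is_least (P Q : nat -> Prop) r :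
  (forall n, P n <-> Q n) -> is_least P r <-> is_least Q r.
Proof.
move=> PQ; split=> -[Pr min_r]; split=> [|n lt_nr /PQ]; by [apply/PQ | apply: min_r].
Qed.

Theorem proposition2p2 (k : nat) (m : 'I_k -> nat) (ctr : forall j : 'I_k, 'I_(m j))
  (r : nat) :
  is_cyc_ramsey_number (fun j => star_graph (ctr j)) r <->
  is_ramsey_number (fun j => star_graph (ctr j)) r.
Proof. exact/eq_is_least/ramsey_prop_star_cyc. Qed.
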